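(* Let $\mathcal{G}\subseteq\mathcal{G}'$ be two building sets of the lattice of flats $\mathcal{L}$ of the same loopless matroid. If $\mathcal{G}'$ is flag, then there exists a binary filtration of $\mathcal{G}'$ from $\mathcal{G}$, i.e. a sequence of building sets $\mathcal{G}=\mathcal{G}_p\subsetneq\mathcal{G}_{p-1}\subsetneq\dots\subsetneq\mathcal{G}_0=\mathcal{G}'$ of $\mathcal{L}$ such that for each $i$, $\mathcal{G}_i\setminus\mathcal{G}_{i+1}$ consists of a single element $G$, and $G$ has exactly two factors in $\mathcal{G}_{i+1}$ (i.e. $\max(\mathcal{G}_{i+1})_{\leqslant G}$ has exactly two elements).
   Context: A building set of $\mathcal{L}$ is $\mathcal{H}\subseteq\mathcal{L}\setminus\{\hat0\}$ such that for every $F\neq\hat0$, with $\max\mathcal{H}_{\leqslant F}$ the maximal elements of $\{H\in\mathcal{H}:H\leqslant F\}$ (the $\mathcal{H}$-factors of $F$), the join map $\prod_{H\in\max\mathcal{H}_{\leqslant F}}[\hat0,H]\to[\hat0,F]$ is a poset isomorphism. $\mathcal{S}\subseteq\mathcal{H}$ is nested if for every antichain $A\subseteq\mathcal{S}$ and $\{S_1,\dots,S_k\}\subseteq A$, $k\geqslant2$, $S_1\vee\dots\vee S_k\notin\mathcal{H}$. $\mathcal{H}$ is flag if the simplicial complex of nested sets contained in $\mathcal{H}\setminus\max\mathcal{H}$ is flag (all minimal non-faces have size $2$). *)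

From mathcomp Require Import all_boot.
Set Implicit Arguments. Unset Strict Implicit. Unset Printing Implicit Defensive.

Section Matroid.
Variable E : finType.
Implicit Types (I : {set {set E}}) (A B X Y F : {set E}) (H S T : {set {set E}}).

Definition is_matroid I : Prop :=
  [/\ set0 \in I,
      (forall A B, B \in I -> A \subset B -> A \in I) &
      (forall A B, A \in I -> B \in I -> #|A| < #|B| ->
         exists2 e, e \in B :\: A & e |: A \in I)].

Definition loopless I : Prop := forall e : E, [set e] \in I.

Definition mrank I A : nat := \max_(B in I | B \subset A) #|B|.

Definition mcl I A : {set E} := [set e | mrank I (e |: A) == mrank I A].

Definition flat I A : bool := mcl I A == A.

Definition hat0 I : {set E} := mcl I set0.

Definition ljoin I S : {set E} := mcl I (\bigcup_(X in S) X).

Definition factors H F : {set {set E}} :=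
  [set X in H | (X \subset F) &&
     [forall Y in H, ((Y \subset F) && (X \subset Y)) ==> (Y == X)]].

Definition maxel H : {set {set E}} :=
  [set X in H | [forall Y in H, (X \subset Y) ==> (Y == X)]].

(* Elements of prod_{H in M} [\hat0, H], represented as functions
   (values outside M irrelevant). *)
Definition admissible I (M : {set {set E}}) (x : {set E} -> {set E}) : Prop :=
  forall X, X \in M -> flat I (x X) /\ x X \subset X.

Definition join_fam I (M : {set {set E}}) (x : {set E} -> {set E}) : {set E} :=
  mcl I (\bigcup_(X in M) x X).

(* Building set: H subset of L \ {\hat0}, and for each flat F <> \hat0 the join map
   prod_{X in max H_{<=F}} [\hat0, X] -> [\hat0, F] is a poset isomorphism
   (surjective, and x <= y iff join x <= join y). *)
Definition building I H : Prop :=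
  (forall X, X \in H -> flat I X /\ X <> hat0 I) /\
  (forall F, flat I F -> F <> hat0 I ->
     let M := factors H F in
     (forall Y, flat I Y -> Y \subset F ->
        exists x, admissible I M x /\ join_fam I M x = Y) /\
     (forall x y, admissible I M x -> admissible I M y ->
        (join_fam I M x \subset join_fam I M y <->
         (forall X, X \in M -> x X \subset y X)))).

Definition antichain S : Prop :=
  forall X Y, X \in S -> Y \in S -> X \subset Y -> X = Y.

Definition nested I H S : Prop :=
  S \subset H /\
  forall (Ac : {set {set E}}), Ac \subset S -> antichain Ac ->
    forall T, T \subset Ac -> 2 <= #|T| -> ljoin I T \notin H.

(* Flag: every minimal non-face of the complex of nested sets contained
   in H \ max H has size 2. *)
Definition flag I H : Prop :=
  forall S, S \subset H :\: maxel H -> ~ nested I H S ->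
    (forall T, T \proper S -> nested I H T) -> #|S| = 2.

Definition binary_filtration I (G G' : {set {set E}}) : Prop :=
  exists (p : nat) (Gs : nat -> {set {set E}}),
    [/\ Gs p = G, Gs 0 = G',
        (forall i, i <= p -> building I (Gs i)) &
        (forall i, i < p ->
           Gs i.+1 \subset Gs i /\
           exists X, Gs i :\: Gs i.+1 = [set X] /\ #|factors (Gs i.+1) X| = 2)].

End Matroid.

(* Induct on #|G' :\: G|, adding one flat at a time.  By flagness, a flat X of
   G' :\: G of minimal size has exactly two G-factors: a minimal set of at least
   two G-factors of X whose join lies in G' is a minimal non-nested set of G', so
   it has two elements; its join is in G' :\: G and below X, hence equal to X by
   minimality, so these are all the G-factors of X.  Among the flats of G' :\: G
   with two G-factors choose X of maximal size.  Then X |: G is again building: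
   if F lies above X with no element of G in between, both G-factors of X are
   G-factors of F (otherwise the join of X with the G-factor of F above one of
   them is a larger flat of G' :\: G with two G-factors), so the (X |: G)-factors
   of F arise from its G-factors by merging the two factors of X into X, and such
   a merge preserves the product decomposition of [0, F]. *)

From mathcomp Require Import all_boot zify.
Set Implicit Arguments. Unset Strict Implicit. Unset Printing Implicit Defensive.

Section Factors.
Variable E : finType.
Implicit Types (F X Y Z W : {set E}) (H T : {set {set E}}).

Lemma factorsP H F Z :
  reflect [/\ Z \in H, Z \subset F &
             forall Y, Y \in H -> Y \subset F -> Z \subset Y -> Y = Z]
          (Z \in factors H F).
Proof.
rewrite inE; apply: (iffP and3P) => [[ZH ZF /forall_inP maxZ] | [ZH ZF maxZ]].
  by split=> // Y YH YF ZY; apply/eqP; move: (maxZ Y YH); rewrite YF ZY.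
split=> //; apply/forall_inP => Y YH; apply/implyP => /andP[YF ZY].
by rewrite (maxZ Y YH YF ZY).
Qed.

Lemma factor_in H F Z : Z \in factors H F -> Z \in H.
Proof. by case/factorsP. Qed.

Lemma factor_sub H F Z : Z \in factors H F -> Z \subset F.
Proof. by case/factorsP. Qed.

Lemma factors_antichain H F : antichain (factors H F).
Proof. by move=> P Q /factorsP[_ _ maxP] /factorsP[QH QF _] PQ; rewrite (maxP Q). Qed.

Lemma exists_factor H F Y :
  Y \in H -> Y \subset F -> exists2 Z, Z \in factors H F & Y \subset Z.
Proof.
move=> YH YF; pose above Z := [&& Z \in H, Y \subset Z & Z \subset F].
have [|Z /and3P[ZH YZ ZF] maxZ] := arg_maxnP (fun Z => #|Z|) (_ : above Y).
  by rewrite /above YH subxx.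
exists Z => //; apply/factorsP; split=> // W WH WF ZW.
apply/eqP; rewrite eq_sym eqEcard ZW; apply: maxZ.
by rewrite /above WH WF (subset_trans YZ ZW).
Qed.

Lemma factor_restrict H F F' Z :
  Z \in factors H F -> Z \subset F' -> F' \subset F -> Z \in factors H F'.
Proof.
case/factorsP=> ZH _ maxZ ZF' F'F; apply/factorsP; split=> // Y YH YF'.
exact: maxZ (subset_trans YF' F'F).
Qed.

Lemma factorsU1_eq H X F :
  (X \subset F -> exists2 W, W \in H & (X \subset W) && (W \subset F)) ->
  factors (X |: H) F = factors H F.
Proof.
move=> XW; apply/setP => Z; apply/factorsP/factorsP => [[ZXH ZF maxZ] | [ZH ZF maxZ]].
  have ZH : Z \in H.
    case/setU1P: ZXH => // eZX; rewrite eZX in ZF maxZ *.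
    have [W WH /andP[XW' WF]] := XW ZF.
    by rewrite -(maxZ W (setU1r _ WH) WF XW').
  by split=> // Y YH; apply/maxZ/setU1r.
split; [exact: setU1r | by [] | move=> Y /setU1P[-> XF ZX | ]]; last exact: maxZ.
have [W WH /andP[XW' WF]] := XW XF.
have eWZ := maxZ W WH WF (subset_trans ZX XW').
by apply/eqP; rewrite eqEsubset ZX -eWZ XW'.
Qed.

Lemma factorsU1_new H X F :
  X \subset F -> (forall W, W \in H -> X \subset W -> ~~ (W \subset F)) ->
  factors (X |: H) F = X |: (factors H F :\: factors H X).
Proof.
move=> XF noW; apply/setP => Z; rewrite in_setU1 in_setD.
have [-> | ZnX] /= := eqVneq Z X.
  apply/factorsP; split=> [||Y]; [exact: setU11 | by [] |].
  by case/setU1P=> [-> // | YH] YF XY; move: (noW Y YH XY); rewrite YF.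
apply/factorsP/andP => [[ZXH ZF maxZ] | [ZnXf /factorsP[ZH ZF maxZ]]].
  have ZH : Z \in H by case/setU1P: ZXH => // eZX; move/eqP: ZnX.
  split; last by apply/factorsP; split=> // Y YH; apply/maxZ/setU1r.
  apply/negP => /factorsP[_ ZX _]; move/eqP: ZnX; apply.
  by rewrite (maxZ X (setU11 _ _) XF ZX).
split=> //; first exact: setU1r.
move=> Y /setU1P[-> _ ZX | ]; last exact: maxZ.
case/negP: ZnXf; apply/factorsP; split=> // V VH VX; apply: maxZ => //.
exact: subset_trans VX XF.
Qed.

Lemma flag_card_minimal_nonnested (I : {set {set E}}) H T :
  flag I H -> T \subset H :\: maxel H -> antichain T -> 2 <= #|T| ->
  ljoin I T \in H ->
  (forall T', T' \proper T -> 2 <= #|T'| -> ljoin I T' \notin H) ->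
  #|T| = 2.
Proof.
move=> flagH TH antiT T2 TjH minT; apply: flagH => // [[_ nestT] | T' T'T].
  by have := nestT T (subxx T) antiT T (subxx T) T2; rewrite TjH.
split; first exact: subset_trans (proper_sub T'T) (subset_trans TH (subsetDl _ _)).
move=> Ac AcT' _ T'' T''Ac; apply: minT.
exact: sub_proper_trans (subset_trans T''Ac AcT') T'T.
Qed.

End Factors.

Section BuildingSets.
Variables (E : finType) (I : {set {set E}}).
Hypothesis matI : is_matroid I.
Implicit Types (A B C F P Q R W X Y Z : {set E}) (H M S T : {set {set E}}).
Implicit Types (x y : {set E} -> {set E}).

Lemma leq_card_mrank A B : B \in I -> B \subset A -> #|B| <= mrank I A.
Proof. by move=> BI BA; rewrite /mrank (bigmax_sup B) // BI. Qed.

Lemma mrank_witness A : exists B, [/\ B \in I, B \subset A & #|B| = mrank I A].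
Proof.
have [set0I _ _] := matI.
have : 0 < #|[pred B | (B \in I) && (B \subset A)]|.
  by apply/card_gt0P; exists set0; rewrite inE set0I sub0set.
by case/(eq_bigmax_cond (fun B => #|B|)) => B /andP[BI BA] rB; exists B.
Qed.

Lemma mrank_mono A B : A \subset B -> mrank I A <= mrank I B.
Proof.
move=> AB; have [C [CI CA <-]] := mrank_witness A.
exact/leq_card_mrank/(subset_trans CA).
Qed.

Lemma indep_extend A B : B \in I -> B \subset A ->
  exists2 C, [/\ C \in I, B \subset C & C \subset A] & #|C| = mrank I A.
Proof.
have [_ _ augment] := matI.
have [n] := ubnP (mrank I A - #|B|); elim: n B => // n IHn B lt_n BI BA.
have [lt_Br | ge_Br] := ltnP #|B| (mrank I A); last first.
  by exists B => //; apply/eqP; rewrite eqn_leq ge_Br leq_card_mrank.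
have [W [WI WA Wr]] := mrank_witness A.
rewrite -Wr in lt_Br; have [e /setDP[eW eB] eBI] := augment B W BI WI lt_Br.
have eBA : e |: B \subset A by rewrite subUset sub1set (subsetP WA).
have [|C [CI eBC CA] Cr] := IHn (e |: B) _ eBI eBA.
  by rewrite cardsU1 eB; lia.
by exists C => //; split=> //; apply: subset_trans eBC; apply: subsetUr.
Qed.

Lemma mrank_submod X Y :
  mrank I (X :|: Y) + mrank I (X :&: Y) <= mrank I X + mrank I Y.
Proof.
have [B [BI BXY <-]] := mrank_witness (X :&: Y).
have BU : B \subset X :|: Y.
  exact: subset_trans BXY (subset_trans (subsetIl X Y) (subsetUl X Y)).
have [C [CI BC CU] <-] := indep_extend BI BU.
have [_ indep_sub _] := matI.
have CI' D : C :&: D \in I by apply: indep_sub CI (subsetIl _ _).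
have CX : #|C :&: X| <= mrank I X := leq_card_mrank (CI' X) (subsetIr _ _).
have CY : #|C :&: Y| <= mrank I Y := leq_card_mrank (CI' Y) (subsetIr _ _).
have CXY : #|B| <= #|(C :&: X) :&: (C :&: Y)|.
  by apply: subset_leq_card; rewrite -setIIr subsetI BC.
have CXuY : (C :&: X) :|: (C :&: Y) = C by rewrite -setIUr; apply/setIidPl.
by have := cardsUI (C :&: X) (C :&: Y); rewrite CXuY; lia.
Qed.

Lemma subset_mcl A : A \subset mcl I A.
Proof. by apply/subsetP => e eA; rewrite inE (setUidPr _) ?sub1set. Qed.

Lemma mcl_mono A B : A \subset B -> mcl I A \subset mcl I B.
Proof.
move=> AB; apply/subsetP => e; rewrite !inE => /eqP eA.
have := mrank_submod B (e |: A).
have -> : B :|: (e |: A) = e |: B by rewrite setUCA (setUidPl AB).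
have := mrank_mono (_ : A \subset B :&: (e |: A)); rewrite subsetI AB subsetUr => /(_ isT).
rewrite eA eqn_leq (mrank_mono (subsetUr _ B)) andbT; lia.
Qed.

Lemma mrank_mcl A : mrank I (mcl I A) = mrank I A.
Proof.
apply/eqP; rewrite eqn_leq (mrank_mono (subset_mcl A)) andbT leqNgt; apply/negP => lt_r.
have [B [BI BA Br]] := mrank_witness A.
have [W [WI WA Wr]] := mrank_witness (mcl I A).
have [_ _ augment] := matI.
have [|e /setDP[eW eB] eBI] := augment B W BI WI; first by rewrite Br Wr.
have := subsetP WA e eW; rewrite inE => /eqP eA.
have := leq_card_mrank eBI (setUS [set e] BA).
by rewrite eA cardsU1 eB Br ltnn.
Qed.

Lemma flat_mcl A : flat I (mcl I A).
Proof.
rewrite /flat eqEsubset subset_mcl andbT; apply/subsetP => e; rewrite !inE mrank_mcl.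
move=> /eqP erA; rewrite eqn_leq (mrank_mono (subsetUr _ A)) andbT -erA.
by rewrite mrank_mono // setUS // subset_mcl.
Qed.

Lemma mcl_minimal A F : A \subset F -> flat I F -> mcl I A \subset F.
Proof. by move=> AF /eqP <-; apply: mcl_mono. Qed.

Lemma hat0_subset F : flat I F -> hat0 I \subset F.
Proof. exact/mcl_minimal/sub0set. Qed.

Lemma eq_hat0 F : flat I F -> F \subset hat0 I -> F = hat0 I.
Proof. by move=> flatF F0; apply/eqP; rewrite eqEsubset F0 hat0_subset. Qed.

Lemma join_fam_sup M x Z : Z \in M -> x Z \subset join_fam I M x.
Proof. by move=> ZM; apply: subset_trans (subset_mcl _); apply: bigcup_sup. Qed.

Lemma join_fam_least M x F :
  flat I F -> (forall Z, Z \in M -> x Z \subset F) -> join_fam I M x \subset F.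
Proof. by move=> flatF xF; apply: mcl_minimal => //; apply/bigcupsP. Qed.

Lemma join_fam_mono M x y :
  (forall Z, Z \in M -> x Z \subset y Z) -> join_fam I M x \subset join_fam I M y.
Proof.
move=> xy; apply: join_fam_least => [|Z ZM]; first exact: flat_mcl.
exact: subset_trans (xy Z ZM) (join_fam_sup _ ZM).
Qed.

Lemma ljoin_sup T Z : Z \in T -> Z \subset ljoin I T.
Proof. exact: (join_fam_sup id). Qed.

Lemma ljoin_least T F : flat I F -> (forall Z, Z \in T -> Z \subset F) -> ljoin I T \subset F.
Proof. exact: (join_fam_least (x := id)). Qed.

Definition join_surj M F := forall Y, flat I Y -> Y \subset F ->
  exists x, admissible I M x /\ join_fam I M x = Y.

Definition join_reflect M := forall x y, admissible I M x -> admissible I M y ->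
  join_fam I M x \subset join_fam I M y -> forall Z, Z \in M -> x Z \subset y Z.

Lemma buildingP H : building I H <->
  (forall X, X \in H -> flat I X /\ X <> hat0 I) /\
  (forall F, flat I F -> F <> hat0 I ->
     join_surj (factors H F) F /\ join_reflect (factors H F)).
Proof.
split=> -[HX HF]; split=> // F flatF F0; have [surjF reflF] := HF F flatF F0.
  by split=> // x y adx ady; case: (reflF x y adx ady).
by split=> // x y adx ady; split; [exact: reflF | exact: join_fam_mono].
Qed.

Lemma join_surj_merge M S F X :
  join_surj M F -> S \subset M -> X \notin M -> flat I X ->
  (forall Z, Z \in S -> Z \subset X) -> join_surj (X |: (M :\: S)) F.
Proof.
move=> surjM SM XnM flatX SX Y flatY YF; have [x [adx <-]] := surjM Y flatY YF.
pose x' Z := if Z \in M then x Z else join_fam I S x.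
have x'X : x' X = join_fam I S x by rewrite /x' (negbTE XnM).
have x'M Z : Z \in M -> x' Z = x Z by rewrite /x' => ->.
exists x'; split.
  move=> Z /setU1P[-> | /setDP[ZM _]]; last by rewrite x'M //; exact: adx.
  rewrite x'X; split; first exact: flat_mcl.
  apply: join_fam_least => // V VS.
  exact: subset_trans (adx V (subsetP SM V VS)).2 (SX V VS).
apply/eqP; rewrite eqEsubset; apply/andP; split; apply: join_fam_least (flat_mcl _) _.
  move=> Z /setU1P[-> | /setDP[ZM _]]; last by rewrite x'M //; exact: join_fam_sup.
  rewrite x'X; apply: join_fam_least (flat_mcl _) _ => V VS.
  exact/join_fam_sup/(subsetP SM).
move=> Z ZM; have [ZS | ZnS] := boolP (Z \in S).
  by apply: subset_trans (join_fam_sup x ZS) _; rewrite -x'X; apply/join_fam_sup/setU11.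
by rewrite -x'M //; apply/join_fam_sup/setU1r/setDP.
Qed.

(* Split the [X]-component into [S]-components, by surjectivity of [S] onto
   [0, X], and compare in the product over [M]. *)
Lemma join_reflect_merge M S X :
  join_reflect M -> join_surj S X -> S \subset M -> join_reflect (X |: (M :\: S)).
Proof.
move=> reflM surjS SM x y adx ady xy.
have split_at z : admissible I (X |: (M :\: S)) z -> exists a,
    [/\ admissible I S a, join_fam I S a = z X,
        admissible I M (fun Z => if Z \in S then a Z else z Z) &
        join_fam I M (fun Z => if Z \in S then a Z else z Z) = join_fam I (X |: (M :\: S)) z].
  move=> adz; have [flatzX zXX] := adz X (setU11 _ _).
  have [a [ada azX]] := surjS (z X) flatzX zXX.
  exists a; split=> //.
    by move=> Z ZM; case: ifP => ZS; [exact: ada | apply/adz/setU1r/setDP; rewrite ZS].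
  apply/eqP; rewrite eqEsubset; apply/andP; split; apply: join_fam_least (flat_mcl _) _.
    move=> Z ZM; case: ifP => ZS; last by apply/join_fam_sup/setU1r/setDP; rewrite ZS.
    by apply: subset_trans (join_fam_sup a ZS) _; rewrite azX; apply/join_fam_sup/setU11.
  move=> Z /setU1P[-> | /setDP[ZM ZnS]]; last first.
    by have := join_fam_sup (fun Z => if Z \in S then a Z else z Z) ZM; rewrite (negbTE ZnS).
  rewrite -azX; apply: join_fam_least (flat_mcl _) _ => V VS.
  by have := join_fam_sup (fun Z => if Z \in S then a Z else z Z) (subsetP SM V VS); rewrite VS.
have [a [ada axX adxM jx]] := split_at x adx.
have [b [adb byX adyM jy]] := split_at y ady.
rewrite -jx -jy in xy; have ab := reflM _ _ adxM adyM xy.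
move=> Z /setU1P[-> | /setDP[ZM ZnS]]; last first.
  by have := ab Z ZM; rewrite (negbTE ZnS).
rewrite -axX -byX; apply: join_fam_mono => V VS.
by have := ab V (subsetP SM V VS); rewrite VS.
Qed.

Lemma ljoin_factors_notin H F T :
  flat I F -> T \subset factors H F -> 2 <= #|T| -> ljoin I T \notin H.
Proof.
move=> flatF TF /card_gt1P[P [Q [PT QT PQ]]]; apply/negP => JH.
have JF : ljoin I T \subset F by apply: ljoin_least => // Z /(subsetP TF)/factor_sub.
have eqJ R : R \in T -> ljoin I T = R.
  move=> RT; case/factorsP: (subsetP TF R RT) => _ _ maxR.
  exact: maxR JH JF (ljoin_sup RT).
by case/eqP: PQ; rewrite -(eqJ P PT) (eqJ Q QT).
Qed.

Section Building.
Variable H : {set {set E}}.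
Hypothesis buildH : building I H.

Lemma building_flat X : X \in H -> flat I X.
Proof. by case: buildH => HX _ /HX[]. Qed.

Lemma building_neq0 X : X \in H -> X <> hat0 I.
Proof. by case: buildH => HX _ /HX[]. Qed.

Lemma building_surj F : flat I F -> F <> hat0 I -> join_surj (factors H F) F.
Proof. by move=> flatF F0; have [_ /(_ F flatF F0)[]] := (buildingP H).1 buildH. Qed.

Lemma building_reflect F : flat I F -> F <> hat0 I -> join_reflect (factors H F).
Proof. by move=> flatF F0; have [_ /(_ F flatF F0)[]] := (buildingP H).1 buildH. Qed.

Lemma admissible_factors_hat0 F S x : admissible I S x ->
  admissible I (factors H F) (fun Z => if Z \in S then x Z else hat0 I).
Proof.
move=> adx Z ZF; case: ifP => [/adx // | _]; split; first exact: flat_mcl.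
exact/hat0_subset/building_flat/(factor_in ZF).
Qed.

Lemma factors_join F : flat I F -> F <> hat0 I -> ljoin I (factors H F) = F.
Proof.
move=> flatF F0; have [x [adx xF]] := building_surj flatF F0 flatF (subxx F).
apply/eqP; rewrite eqEsubset ljoin_least //=; last by move=> Z /factor_sub.
by rewrite -{1}xF; apply: join_fam_mono => Z /adx[].
Qed.

Lemma factors_meet_hat0 F P Q Z : flat I F -> F <> hat0 I ->
  P \in factors H F -> Q \in factors H F -> P != Q ->
  flat I Z -> Z \subset P -> Z \subset Q -> Z = hat0 I.
Proof.
move=> flatF F0 PF QF PQ flatZ ZP ZQ.
pose only R W := if W \in [set R] then Z else hat0 I.
have adm R : Z \subset R -> admissible I (factors H F) (only R).
  by move=> ZR; apply: admissible_factors_hat0 => W /set1P->.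
have le_join : join_fam I (factors H F) (only P) \subset join_fam I (factors H F) (only Q).
  apply: join_fam_least (flat_mcl _) _ => W _; rewrite {1}/only; case: ifP => _.
    by have := join_fam_sup (only Q) QF; rewrite /only set11.
  exact/hat0_subset/flat_mcl.
have := building_reflect flatF F0 (adm P ZP) (adm Q ZQ) le_join PF.
by rewrite /only set11 inE (negbTE PQ); apply: eq_hat0.
Qed.

Lemma factors_eq F S : flat I F -> F <> hat0 I ->
  S \subset factors H F -> F \subset ljoin I S -> S = factors H F.
Proof.
move=> flatF F0 SF FS; apply/eqP; rewrite eqEsubset SF; apply/subsetP => Z ZF.
apply/negPn/negP => ZnS.
have adS : admissible I S id by move=> W /(subsetP SF)/factor_in/building_flat.
have adF : admissible I (factors H F) id by move=> W /factor_in/building_flat.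
have adS' := admissible_factors_hat0 (F := F) adS.
have le_join : ljoin I (factors H F) \subset
               join_fam I (factors H F) (fun W => if W \in S then W else hat0 I).
  rewrite factors_join //.
  apply: subset_trans FS (ljoin_least (flat_mcl _) _) => W WS.
  by have := join_fam_sup (fun W => if W \in S then W else hat0 I) (subsetP SF W WS); rewrite WS.
have := building_reflect flatF F0 adF adS' le_join ZF; rewrite (negbTE ZnS) => Z0.
exact/(building_neq0 (factor_in ZF))/eq_hat0/Z0/building_flat/(factor_in ZF).
Qed.

Lemma building_join P Q Z : P \in H -> Q \in H ->
  flat I Z -> Z <> hat0 I -> Z \subset P -> Z \subset Q -> mcl I (P :|: Q) \in H.
Proof.
move=> PH QH flatZ Z0 ZP ZQ; set J := mcl I (P :|: Q).
have PJ : P \subset J := subset_trans (subsetUl P Q) (subset_mcl _).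
have QJ : Q \subset J := subset_trans (subsetUr P Q) (subset_mcl _).
have J0 : J <> hat0 I.
  by move=> J0; apply: (building_neq0 PH); apply: eq_hat0 (building_flat PH) _; rewrite -J0.
have [P' P'J PP'] := exists_factor PH PJ; have [Q' Q'J QQ'] := exists_factor QH QJ.
have eP'Q' : P' = Q'.
  apply/eqP/negPn/negP => P'Q'; apply: Z0.
  apply: factors_meet_hat0 (flat_mcl _) J0 P'J Q'J P'Q' flatZ _ _.
    exact: subset_trans ZP PP'.
  exact: subset_trans ZQ QQ'.
suff -> : J = P' by apply: factor_in P'J.
apply/eqP; rewrite eqEsubset (factor_sub P'J) andbT.
by apply: mcl_minimal (building_flat (factor_in P'J)); rewrite subUset PP' eP'Q'.
Qed.

Lemma factors_card_ge2 X : flat I X -> X <> hat0 I -> X \notin H -> 2 <= #|factors H X|.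
Proof.
move=> flatX X0 XnH; rewrite leqNgt; apply/negP => lt2.
have := factors_join flatX X0.
have [/cards0_eq-> | pos] := posnP #|factors H X|.
  by rewrite /ljoin big_set0 => /esym.
have /cards1P[A eA] : #|factors H X| == 1 by apply/eqP; lia.
rewrite eA /ljoin big_set1 => eAX.
have AH : A \in H by apply: (factor_in (F := X)); rewrite eA set11.
by case/negP: XnH; rewrite -eAX (eqP (building_flat AH)).
Qed.

Lemma card_factors_mcl_setU X A B W : flat I X -> X <> hat0 I ->
  factors H X = [set A; B] -> W \in H -> A \subset W -> ~~ (X \subset W) ->
  W \in factors H (mcl I (X :|: W)) -> #|factors H (mcl I (X :|: W))| = 2.
Proof.
move=> flatX X0 XAB WH AW XnW WJ; set J := mcl I (X :|: W).
have XJ : X \subset J := subset_trans (subsetUl X W) (subset_mcl _).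
have J0 : J <> hat0 I by move=> J0; apply: X0; apply: eq_hat0 => //; rewrite -J0.
have BX : B \in factors H X by rewrite XAB set22.
have [B' B'J BB'] := exists_factor (factor_in BX) (subset_trans (factor_sub BX) XJ).
have X_AB : X = ljoin I [set A; B] by rewrite -XAB factors_join.
have WB' : W != B'.
  apply: contraNneq XnW => eWB'; rewrite X_AB; apply: ljoin_least (building_flat WH) _.
  by move=> Z /set2P[]->; rewrite // eWB'.
have XWB' : X \subset ljoin I [set W; B'].
  rewrite X_AB; apply: ljoin_least (flat_mcl _) _ => Z /set2P[]->.
    exact: subset_trans AW (ljoin_sup (set21 _ _)).
  exact: subset_trans BB' (ljoin_sup (set22 _ _)).
rewrite -(@factors_eq J [set W; B']) ?cards2 ?WB' //; first exact: flat_mcl.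
  by apply/subsetP => Z /set2P[]->.
apply: mcl_minimal (flat_mcl _); rewrite subUset XWB'.
exact: ljoin_sup (set21 _ _).
Qed.

End Building.

Lemma building_setU1 G X : building I G -> flat I X -> X <> hat0 I ->
  (forall F, flat I F -> F <> hat0 I -> X \subset F ->
     (forall W, W \in G -> X \subset W -> ~~ (W \subset F)) ->
     factors G X \subset factors G F) ->
  building I (X |: G).
Proof.
move=> buildG flatX X0 XF_factors; apply/buildingP; split.
  by move=> Z /setU1P[-> | /(proj1 buildG)].
move=> F flatF F0; have surjF := building_surj buildG flatF F0.
have reflF := building_reflect buildG flatF F0.
have [XF | XnF] := boolP (X \subset F); last by rewrite factorsU1_eq // => XF; case/negP: XnF.
case: (pickP [pred W in G | (X \subset W) && (W \subset F)]) => [W /andP[WG XWF] | noW].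
  by rewrite factorsU1_eq //; exists W.
have {}noW W : W \in G -> X \subset W -> ~~ (W \subset F).
  by move=> WG XW; apply/negP => WF; have := noW W; rewrite /= WG XW WF.
have SF := XF_factors F flatF F0 XF noW.
have XnGF : X \notin factors G F.
  by apply/negP => /factor_in XG; have := noW X XG (subxx X); rewrite XF.
rewrite factorsU1_new //; split.
  by apply: join_surj_merge surjF SF XnGF flatX _ => Z /factor_sub.
exact: join_reflect_merge reflF (building_surj buildG flatX X0) SF.
Qed.

Section Filtration.
Variables G G' : {set {set E}}.
Hypotheses (buildG : building I G) (buildG' : building I G') (subGG' : G \subset G').

Lemma card_factors_minimal X : flag I G' -> X \in G' :\: G ->
  (forall Y, Y \in G' :\: G -> #|X| <= #|Y|) -> #|factors G X| = 2.
Proof.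
move=> flagG' /setDP[XG' XnG] minX.
have flatX := building_flat buildG' XG'; have X0 := building_neq0 buildG' XG'.
have ge2 := factors_card_ge2 buildG flatX X0 XnG.
apply/eqP; rewrite eqn_leq ge2 andbT leqNgt; apply/negP => gt2.
pose dep T := [&& T \subset factors G X, 2 <= #|T| & ljoin I T \in G'].
have [|T /and3P[TX T2 TG'] minT] := arg_minnP (fun T => #|T|) (_ : dep (factors G X)).
  by rewrite /dep subxx ge2 factors_join.
have TnG := ljoin_factors_notin flatX TX T2.
have eTX : ljoin I T = X.
  apply/eqP; rewrite eqEcard (ljoin_least flatX) => [|Z /(subsetP TX)/factor_sub //].
  by apply: minX; apply/setDP.
have eT : T = factors G X by apply: (factors_eq buildG flatX X0 TX); rewrite eTX.
suff T_2 : #|T| = 2 by move: gt2; rewrite -eT T_2.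
apply: flag_card_minimal_nonnested flagG' _ _ T2 TG' _.
- apply/subsetP => Z /(subsetP TX) ZX.
  have ZG' : Z \in G' := subsetP subGG' Z (factor_in ZX).
  rewrite !inE ZG' andbT /=; apply/forall_inP => /(_ X XG').
  by rewrite (factor_sub ZX) /= => /eqP eXZ; move: XnG; rewrite eXZ (factor_in ZX).
- by move=> P Q /(subsetP TX) PX /(subsetP TX) QX; apply: factors_antichain G X P Q PX QX.
move=> T' T'T T'2; apply/negP => T'G'.
have := minT T'; rewrite /dep T'2 T'G' (subset_trans (proper_sub T'T) TX) => /(_ isT).
by rewrite leqNgt proper_card.
Qed.

Lemma factors_sub_maximal X F : X \in G' :\: G -> #|factors G X| = 2 ->
  (forall Y, Y \in G' :\: G -> #|factors G Y| = 2 -> #|Y| <= #|X|) ->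
  flat I F -> X \subset F -> (forall W, W \in G -> X \subset W -> ~~ (W \subset F)) ->
  factors G X \subset factors G F.
Proof.
move=> /setDP[XG' XnG] X2 maxX flatF XF noW.
have flatX := building_flat buildG' XG'; have X0 := building_neq0 buildG' XG'.
apply/subsetP => A AX; apply/negPn/negP => AnF.
have [B XAB] : exists B, factors G X = [set A; B].
  move/eqP/cards2P: X2 => [P [Q [_ ePQ]]]; move: AX; rewrite ePQ => /set2P[]->.
    by exists Q.
  by exists P; rewrite setUC.
have [AG AsubX] := (factor_in AX, factor_sub AX).
have [W WF AW] := exists_factor AG (subset_trans AsubX XF); have WG := factor_in WF.
have XnW : ~~ (X \subset W).
  by apply/negP => XW; have := noW W WG XW; rewrite (factor_sub WF).
have WnX : ~~ (W \subset X).
  apply/negP => WX; case/factorsP: AX => _ _ maxA.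
  by move: AnF; rewrite -(maxA W WG WX AW) WF.
set J := mcl I (X :|: W).
have XJ : X \subset J := subset_trans (subsetUl X W) (subset_mcl _).
have WJ : W \subset J := subset_trans (subsetUr X W) (subset_mcl _).
have JF : J \subset F by apply: mcl_minimal flatF; rewrite subUset XF (factor_sub WF).
have JG'G : J \in G' :\: G.
  apply/setDP; split; last by apply/negP => JG; have := noW J JG XJ; rewrite JF.
  have WG' : W \in G' := subsetP subGG' W WG.
  have [flatA A0] := (building_flat buildG AG, building_neq0 buildG AG).
  exact: (building_join buildG' XG' WG' flatA A0 AsubX AW).
have J2 : #|factors G J| = 2.
  exact: (card_factors_mcl_setU buildG flatX X0 XAB WG AW XnW (factor_restrict WF WJ JF)).
have XJp : X \proper J by rewrite properE XJ; apply: contra WnX; apply: subset_trans WJ.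
by have := maxX J JG'G J2; rewrite leqNgt proper_card.
Qed.

Lemma exists_binary_extension : flag I G' -> G != G' ->
  exists X, [/\ X \in G' :\: G, #|factors G X| = 2 &
    forall Y, Y \in G' :\: G -> #|factors G Y| = 2 -> #|Y| <= #|X|].
Proof.
move=> flagG' neqG; have [X0 X0G'G] : exists X0, X0 \in G' :\: G.
  by apply/set0Pn; rewrite setD_eq0; apply: contra neqG => G'G; rewrite eqEsubset subGG'.
have [X1 X1G'G minX1] := arg_minnP (fun Y => #|Y|) X0G'G.
pose cand Y := (Y \in G' :\: G) && (#|factors G Y| == 2).
have [|X /andP[XG'G /eqP X2] maxX] := arg_maxnP (fun Y => #|Y|) (_ : cand X1).
  by rewrite /cand (card_factors_minimal flagG' X1G'G minX1) eqxx andbT.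
by exists X; split=> // Y YG'G Y2; apply: maxX; rewrite /cand YG'G Y2.
Qed.

Lemma building_setU1_maximal X : X \in G' :\: G -> #|factors G X| = 2 ->
  (forall Y, Y \in G' :\: G -> #|factors G Y| = 2 -> #|Y| <= #|X|) ->
  building I (X |: G).
Proof.
move=> XG'G X2 maxX; have [XG' _] := setDP XG'G.
apply: building_setU1 buildG (building_flat buildG' XG') (building_neq0 buildG' XG') _.
by move=> F flatF _ XF noW; apply: factors_sub_maximal.
Qed.

End Filtration.

End BuildingSets.

Lemma binary_filtration_refl (E : finType) (I : {set {set E}}) (G : {set {set E}}) :
  building I G -> binary_filtration I G G.
Proof. by move=> buildG; exists 0, (fun=> G); split. Qed.

Lemma binary_filtration_step (E : finType) (I : {set {set E}}) (G G' : {set {set E}}) X :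
  X \notin G -> #|factors G X| = 2 -> building I G ->
  binary_filtration I (X |: G) G' -> binary_filtration I G G'.
Proof.
move=> XnG X2 buildG [p [Gs [GsX Gs0 buildGs stepGs]]].
exists p.+1, (fun i => if i <= p then Gs i else G); split=> [||i|i].
- by rewrite ltnn.
- exact: Gs0.
- by case: ifP => // ip _; apply: buildGs.
rewrite ltnS => le_ip; rewrite le_ip; case: ltnP => [lt_ip | ge_ip]; first exact: stepGs.
have -> : i = p by apply/eqP; rewrite eqn_leq le_ip.
rewrite GsX; split; first exact: subsetUr.
exists X; split=> //; apply/setP => Z; rewrite !inE.
by have [-> | ZnX] := eqVneq Z X; rewrite ?XnG // andNb.
Qed.

Theorem proposition3p21 (E : finType) (I : {set {set E}})
  (hM : is_matroid I) (hL : loopless I) (G G' : {set {set E}})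
  (hG : building I G) (hG' : building I G') (hsub : G \subset G')
  (hflag : flag I G') :
  binary_filtration I G G'.
Proof.
have [n] := ubnP #|G' :\: G|; elim: n G hG hsub => // n IHn G hG hsub lt_n.
have [<- | neqG] := eqVneq G G'; first exact: binary_filtration_refl.
have [X [XG'G X2 maxX]] := exists_binary_extension hM hG hG' hsub hflag neqG.
have [XG' XnG] := setDP XG'G.
apply: (binary_filtration_step XnG X2 hG); apply: IHn.
- exact: (building_setU1_maximal hM hG hG' hsub XG'G X2 maxX).
- by rewrite subUset sub1set XG' hsub.
have : G' :\: (X |: G) \proper G' :\: G.
  rewrite properE setDS ?subsetUr //=; apply/subsetPn; exists X => //.
  by rewrite !inE eqxx.
by move/proper_card => lt_card; rewrite -ltnS (leq_ltn_trans lt_card lt_n).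
Qed.
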